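(* Let $X$ be a real Hilbert space, let $\gamma>0$, and let $f:X\to(-\infty,+\infty]$ be a proper $\Phi_{lsc}^{\mathbb{R}}$-convex function such that $\mathrm{dom}\, f=\mathrm{dom}\,\partial_{lsc}^{\mathbb{R}} f$. Let $x_0\in\mathrm{dom}\, f$. If there exist $a_0\geq -\frac{1}{2\gamma}$ and $x\in X$ such that $$x\in\arg\min_{z\in X}\Big[f(z)+\Big(\tfrac{1}{2\gamma}+a_0\Big)\|z-x_0\|^2\Big],$$ then $\big(J_\gamma(x_0)-J_\gamma(x)\big)\cap\partial_{lsc}^{\mathbb{R}} f(x)\neq\emptyset$, where $J_\gamma(x_0)-J_\gamma(x)=\{\phi_0-\phi:\ \phi_0\in J_\gamma(x_0),\ \phi\in J_\gamma(x)\}\subset\mathbb{R}\times X$.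
   Context: $\Phi_{lsc}^{\mathbb{R}}=\{\phi=(a,u)\in\mathbb{R}\times X\}$, where $\phi=(a,u)$ is identified with the function $\phi(x)=-a\|x\|^2+\langle u,x\rangle$; differences of elements are taken componentwise in $\mathbb{R}\times X$. A function $f:X\to(-\infty,+\infty]$ is $\Phi_{lsc}^{\mathbb{R}}$-convex if $f(x)=\sup\{\phi(x):\phi\in\Phi_{lsc}^{\mathbb{R}},\ \phi\le f\}$ for all $x\in X$. For $x_0\in\mathrm{dom}\, f$, the $\Phi_{lsc}^{\mathbb{R}}$-subdifferential is $\partial_{lsc}^{\mathbb{R}} f(x_0)=\{\phi\in\Phi_{lsc}^{\mathbb{R}}: f(y)-f(x_0)\ge\phi(y)-\phi(x_0)\ \forall y\in X\}$, and $\mathrm{dom}\,\partial_{lsc}^{\mathbb{R}} f=\{x: \partial_{lsc}^{\mathbb{R}} f(x)\neq\emptyset\}$. The duality map is $J_\gamma(x)=\partial_{lsc}^{\mathbb{R}}\big(\tfrac{1}{2\gamma}\|\cdot\|^2\big)(x)=\{(a,(\tfrac1\gamma+2a)x): a\in\mathbb{R},\ 2\gamma a\ge -1\}$. *)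

From HB Require Import structures.
From mathcomp Require Import all_boot all_order all_algebra.
From mathcomp Require Import all_classical all_reals all_analysis.
Set Implicit Arguments. Unset Strict Implicit. Unset Printing Implicit Defensive.
Import Order.TTheory GRing.Theory Num.Theory.
Import numFieldNormedType.Exports.
Local Open Scope classical_set_scope.
Local Open Scope ring_scope.

Definition is_inner_product (R : realType) (X : completeNormedModType R)
    (ip : X -> X -> R) : Prop :=
  (forall x y, ip x y = ip y x) /\
  (forall x y z, ip (x + y) z = ip x z + ip y z) /\
  (forall (k : R) x y, ip (k *: x) y = k * ip x y) /\
  (forall x, ip x x = `|x| ^+ 2).

Definition phiev (R : realType) (X : completeNormedModType R)
    (ip : X -> X -> R) (phi : R * X) (x : X) : R :=
  - phi.1 * `|x| ^+ 2 + ip phi.2 x.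

Definition phidiff (R : realType) (X : completeNormedModType R)
    (p q : R * X) : R * X := (p.1 - q.1, p.2 - q.2).

Definition edom (R : realType) (X : completeNormedModType R)
    (f : X -> \bar R) : set X := [set x | (f x < +oo)%E].

Definition proper_fun (R : realType) (X : completeNormedModType R)
    (f : X -> \bar R) : Prop :=
  (forall x, f x != -oo%E) /\ (exists x, (f x < +oo)%E).

Definition phi_convex (R : realType) (X : completeNormedModType R)
    (ip : X -> X -> R) (f : X -> \bar R) : Prop :=
  forall x, f x = ereal_sup
    [set (phiev ip phi x)%:E | phi in [set phi : R * X |
        forall y, ((phiev ip phi y)%:E <= f y)%E]].

Definition phi_subdiff (R : realType) (X : completeNormedModType R)
    (ip : X -> X -> R) (f : X -> \bar R) (x0 : X) : set (R * X) :=
  [set phi | (f x0 < +oo)%E /\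
     forall y, ((phiev ip phi y - phiev ip phi x0)%:E <= f y - f x0)%E].

Definition dom_subdiff (R : realType) (X : completeNormedModType R)
    (ip : X -> X -> R) (f : X -> \bar R) : set X :=
  [set x | phi_subdiff ip f x !=set0].

Definition Jgamma (R : realType) (X : completeNormedModType R)
    (ip : X -> X -> R) (gamma : R) (x : X) : set (R * X) :=
  phi_subdiff ip (fun z => ((2 * gamma)^-1 * `|z| ^+ 2)%:E) x.

From HB Require Import structures.
From mathcomp Require Import all_boot all_order all_algebra.
From mathcomp Require Import all_classical all_reals all_analysis.
From mathcomp Require Import ring lra.
Import Order.TTheory GRing.Theory Num.Theory.
Import numFieldNormedType.Exports.
Local Open Scope classical_set_scope.
Local Open Scope ring_scope.

(* With c := 1/(2 gamma) + a0 >= 0, take phi0 := (a0, 2c x0) in J_gamma(x0) and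
   the element phi := (-1/(2 gamma), 0) of J_gamma(x), which lies in every J_gamma(x).
   Then phi0 - phi = (c, 2c x0), and completing the square gives
   (phi0 - phi)(y) = c ||x0||^2 - c ||y - x0||^2, so the subgradient inequality for
   phi0 - phi at x is exactly the minimality of x for f + c ||. - x0||^2. *)

Section InnerProduct.
Variables (R : realType) (X : completeNormedModType R) (ip : X -> X -> R).
Hypothesis ip_inner : is_inner_product ip.

Lemma ipC x y : ip x y = ip y x.
Proof. by case: ip_inner. Qed.

Lemma ipDl x y z : ip (x + y) z = ip x z + ip y z.
Proof. by case: ip_inner => _ []. Qed.

Lemma ipZl k x y : ip (k *: x) y = k * ip x y.
Proof. by case: ip_inner => _ [_ []]. Qed.

Lemma ipxx x : ip x x = `|x| ^+ 2.
Proof. by case: ip_inner => _ [_ [_]]. Qed.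

Lemma ip0l y : ip 0 y = 0.
Proof. by rewrite -(scale0r (0 : X)) ipZl mul0r. Qed.

Lemma ipBl x y z : ip (x - y) z = ip x z - ip y z.
Proof. by rewrite ipDl -scaleN1r ipZl mulN1r. Qed.

Lemma sqr_normB x y : `|x - y| ^+ 2 = `|x| ^+ 2 - 2 * ip x y + `|y| ^+ 2.
Proof. by rewrite -!ipxx !ipBl ![ip _ (x - y)]ipC !ipBl (ipC y x); ring. Qed.

Lemma phiev_center (c : R) x0 y :
  phiev ip (c, (2 * c) *: x0) y = c * `|x0| ^+ 2 - c * `|y - x0| ^+ 2.
Proof. by rewrite /phiev /= ipZl sqr_normB (ipC y x0); ring. Qed.

Lemma phiev_shift (a b : R) u y :
  phiev ip (a, u) y = phiev ip (b, u) y + (b - a) * `|y| ^+ 2.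
Proof. by rewrite /phiev /=; ring. Qed.

Lemma argmin_phi_subdiff (f : X -> \bar R) (c : R) x0 x :
  f x \is a fin_num ->
  (forall z, (f x + (c * `|x - x0| ^+ 2)%:E <= f z + (c * `|z - x0| ^+ 2)%:E)%E) ->
  phi_subdiff ip f x (c, (2 * c) *: x0).
Proof.
move=> fx_fin xmin; split; first by rewrite ltey_eq fx_fin.
move=> y; rewrite !phiev_center; have := xmin y.
move: fx_fin; case: (f x) => // r _; case: (f y) => [s| |] //=.
- by rewrite -!EFinD !lee_fin => ?; lra.
- by rewrite addye ?leey.
Qed.

Lemma Jgamma_trivial (gamma : R) x : Jgamma ip gamma x (- (2 * gamma)^-1, 0).
Proof.
split=> [|y]; first exact: ltry.
by rewrite /phiev /= !ip0l !addr0 !opprK -EFinB.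
Qed.

Lemma Jgamma_center (gamma a : R) x0 :
  0 <= (2 * gamma)^-1 + a ->
  Jgamma ip gamma x0 (a, (2 * ((2 * gamma)^-1 + a)) *: x0).
Proof.
set c := (2 * gamma)^-1 + a => c_ge0; split=> [|y]; first exact: ltry.
rewrite !(phiev_shift a c) !phiev_center subrr normr0 expr0n /= mulr0 subr0.
rewrite -EFinB lee_fin.
by have := mulr_ge0 c_ge0 (sqr_ge0 `|y - x0|); rewrite /c; lra.
Qed.

End InnerProduct.

Theorem proposition3 (R : realType) (X : completeNormedModType R)
    (ip : X -> X -> R) (gamma : R) (f : X -> \bar R) (x0 : X) :
  is_inner_product ip ->
  0 < gamma ->
  proper_fun f ->
  phi_convex ip f ->
  edom f = dom_subdiff ip f ->
  x0 \in edom f ->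
  forall (a0 : R) (x : X),
    - (2 * gamma)^-1 <= a0 ->
    (forall z : X,
      (f x + (((2 * gamma)^-1 + a0) * `|x - x0| ^+ 2)%:E <=
       f z + (((2 * gamma)^-1 + a0) * `|z - x0| ^+ 2)%:E)%E) ->
    exists phi0 phi : R * X,
      Jgamma ip gamma x0 phi0 /\ Jgamma ip gamma x phi /\
      phi_subdiff ip f x (phidiff phi0 phi).
Proof.
move=> ip_inner _ [f_neq_Noo _] _ _ /set_mem x0_dom a0 x a0_ge xmin.
set c := (2 * gamma)^-1 + a0 in xmin.
have c_ge0 : 0 <= c by rewrite /c -lerBlDl sub0r.
have fx_fin : f x \is a fin_num.
  have := xmin x0; rewrite subrr normr0 expr0n /= mulr0 adde0 => fx_le.
  by move: (f_neq_Noo x) (le_lt_trans fx_le x0_dom); case: (f x).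
exists (a0, (2 * c) *: x0), (- (2 * gamma)^-1, 0).
split; [exact: Jgamma_center | split; first exact: Jgamma_trivial].
rewrite /phidiff /= opprK subr0 addrC.
exact: argmin_phi_subdiff.
Qed.
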